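(* Let $S_{\text{thirds}}=(1,\mathbb{R}^{+},\{-\tfrac13,0,\tfrac13\},f_{\text{add}},\{\bot\}\cup\mathbb{Z}^{+},h_{\text{sqz}},x_0=0)$ and $\widehat{S}_{\text{binary}}=(1,\mathbb{R}^{+},\{\pm\tfrac{1}{2^p}\mid p\in\mathbb{Z}\},f_{\text{add}},\{\bot\}\cup\mathbb{Z}^{+},h_{\text{sqz}},\widehat{x}_0=0)$, where $f_{\text{add}}(x,u)=x+u$ and $$h_{\text{sqz}}(x)=\begin{cases} q & \text{if there is } q\in\mathbb{Z}^{+} \text{ with } -\frac{1}{4\cdot 2^q}\le x-\frac{q}{3}\le\frac{1}{4\cdot 2^q},\\ \bot & \text{otherwise.}\end{cases}$$ Then $\widehat{S}_{\text{binary}}$ is a $1$-illusion of $S_{\text{thirds}}$.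
   Context: A deterministic multi-robot transition system is a 7-tuple $(n,X,U,f,Y,h,x_0)$: $n$ robots, product state space $X$, product action space $U$, transition function $f:X\times U\to X$ (componentwise per robot), product observation space $Y$, observation function $h:X\to Y$ (componentwise per robot, $h^{(i)}$), initial state $x_0$; it evolves by $x_{k+1}=f(x_k,u_k)$, $y_k=h(x_k)$. Here both systems have a single robot. When a primary system $\widehat{S}$ (hatted quantities) emulates a secondary system $S$, a robot policy $\widehat{\pi}^{(i)}$ for robot $i$ of $\widehat{S}$ maps its own action history $\widehat{u}^{(i)}_0,\dots,\widehat{u}^{(i)}_k$, its observation history $\widehat{y}^{(i)}_0,\dots,\widehat{y}^{(i)}_k$, and the state history $x_0,\dots,x_\ell$ of the secondary system (with $\ell$ possibly different from $k$) to an action $\widehat{u}^{(i)}_k$. Robot policies in $S$ choose actions from histories in the same manner. $\widehat{S}$ is an $m$-illusion of $S$ (with $0<m\le n$) if there exist (i) robot policies $\widehat{\pi}^{(1)},\dots,\widehat{\pi}^{(\widehat{n})}$ in $\widehat{S}$, (ii) a strictly increasing function $z:\mathbb{Z}^+\to\mathbb{Z}^+$, and (iii) functions $\rho_k:\{1,\dots,m\}\to\{1,\dots,\widehat{n}\}$, such that for any robot policies $\pi^{(1)},\dots,\pi^{(n)}$ in $S$, for all $k\ge0$ and $1\le i\le m$, $h^{(i)}(x_k)=\widehat{h}^{(\rho_k(i))}(\widehat{x}_{z(k)})$, where $x$ and $\widehat{x}$ are the state trajectories of $S$ and $\widehat{S}$. *)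

From Stdlib Require Import Reals Lra List ClassicalEpsilon.
Import ListNotations.
Open Scope R_scope.

(* A deterministic single-robot transition system (n = 1). *)
Record system := {
  St : Type;
  Act : Type;
  Obs : Type;
  trans : St -> Act -> St;
  obs : St -> Obs;
  init : St
}.

(* Policy of the (single) robot of the secondary system: previous actions
   u_0..u_{k-1} and observations y_0..y_k  |->  u_k. *)
Definition policy (Sy : system) := list (Act Sy) -> list (Obs Sy) -> Act Sy.

(* Policy of the robot of the primary system: its previous actions, its
   observations y^_0..y^_k, and the secondary state history x_0..x_l. *)
Definition ppolicy (P Sy : system) :=
  list (Act P) -> list (Obs P) -> list (St Sy) -> Act P.

Fixpoint sec_run (Sy : system) (pi : policy Sy) (k : nat) : list (Act Sy) * list (St Sy) :=
  match k with
  | O => ([], [init Sy])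
  | S k' => let (us, xs) := sec_run Sy pi k' in
            let x := last xs (init Sy) in
            let u := pi us (map (obs Sy) xs) in
            (us ++ [u], xs ++ [trans Sy x u])
  end.

Definition sec_state (Sy : system) (pi : policy Sy) (k : nat) : St Sy :=
  nth k (snd (sec_run Sy pi k)) (init Sy).

(* For z strictly increasing, ell z k = min { l | k < z l }: the index of the
   secondary state currently being emulated by the primary at its time k. *)
Definition ell (z : nat -> nat) (k : nat) : nat :=
  length (filter (fun l => Nat.leb (z l) k) (seq 0 (S k))).

Fixpoint prim_run (P Sy : system) (pih : ppolicy P Sy) (z : nat -> nat)
  (xsec : nat -> St Sy) (k : nat) : list (Act P) * list (St P) :=
  match k with
  | O => ([], [init P])
  | S k' => let (us, xs) := prim_run P Sy pih z xsec k' in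
            let x := last xs (init P) in
            let u := pih us (map (obs P) xs) (map xsec (seq 0 (S (ell z k')))) in
            (us ++ [u], xs ++ [trans P x u])
  end.

Definition prim_state (P Sy : system) (pih : ppolicy P Sy) (z : nat -> nat)
  (xsec : nat -> St Sy) (k : nat) : St P :=
  nth k (snd (prim_run P Sy pih z xsec k)) (init P).

Definition strictly_increasing (z : nat -> nat) : Prop :=
  forall a b : nat, (a < b)%nat -> (z a < z b)%nat.

(* m-illusion with m = n = n^ = 1 (so rho_k is the identity on {1}). *)
Definition one_illusion (P Q : system) (e : Obs P = Obs Q) : Prop :=
  exists (pih : ppolicy P Q) (z : nat -> nat),
    strictly_increasing z /\
    forall (pi : policy Q) (k : nat),
      obs Q (sec_state Q pi k) = eq_rect _ (fun T => T) (obs P (prim_state P Q pih z (sec_state Q pi) (z k))) _ e.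

(* h_sqz; None plays the role of bottom, Z^+ = {0,1,2,...}. *)
Definition sqz_prop (x : R) (q : nat) : Prop :=
  - (1 / (4 * 2 ^ q)) <= x - INR q / 3 <= 1 / (4 * 2 ^ q).

Definition h_sqz (x : R) : option nat :=
  match excluded_middle_informative (exists q : nat, sqz_prop x q) with
  | left H => Some (proj1_sig (constructive_indefinite_description _ H))
  | right _ => None
  end.

Definition thirds_act := { u : R | u = - (1/3) \/ u = 0 \/ u = 1/3 }.
Definition binary_act := { u : R | exists p : Z, u = / powerRZ 2 p \/ u = - / powerRZ 2 p }.

Definition f_add_thirds (x : R) (u : thirds_act) : R := x + proj1_sig u.
Definition f_add_binary (x : R) (u : binary_act) : R := x + proj1_sig u.

Definition S_thirds : system :=
  {| St := R; Act := thirds_act; Obs := option nat;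
     trans := f_add_thirds; obs := h_sqz; init := 0 |}.

Definition S_binary : system :=
  {| St := R; Act := binary_act; Obs := option nat;
     trans := f_add_binary; obs := h_sqz; init := 0 |}.

Definition obs_eq : Obs S_binary = Obs S_thirds := eq_refl.

(* The emulating robot works in blocks: block l occupies the times
   [l (l + 8), (l + 1) (l + 9)), i.e. 2 l + 9 steps, during which it steers
   towards the secondary state x_{l+1}.  Moving towards the remaining
   displacement r by the largest power of two not exceeding |r| leaves at most
   |r| / 2, so every step halves the error up to a tolerance 2^-(l+8).  The
   error at the start of a block is at most 1/3 + 2^-(l+4) <= 1/2, hence after
   2 l + 9 halvings it is below 2^-(l+5): the primary state at the end of block
   k - 1 is within 2^-(k+4) of x_k.  Since x_k = n / 3 with |n| <= k, this point
   lies in the window of radius 2^-(n+2) that h_sqz attaches to n / 3 and in no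
   other window, so both robots observe the same value. *)

From Stdlib Require Import Reals Lra Lia ZArith List ClassicalEpsilon.
Import ListNotations.
Open Scope R_scope.

Lemma inv_pow2_pos (n : nat) : 0 < / 2 ^ n.
Proof. apply Rinv_0_lt_compat, pow_lt; lra. Qed.

Lemma inv_pow2_le (m n : nat) : (m <= n)%nat -> / 2 ^ n <= / 2 ^ m.
Proof.
  intros Hmn. apply Rinv_le_contravar; [apply pow_lt; lra|].
  apply Rle_pow; [lra | exact Hmn].
Qed.

Lemma inv_pow2_add (m n : nat) : / 2 ^ (m + n) = / 2 ^ m * / 2 ^ n.
Proof. rewrite pow_add. apply Rinv_mult. Qed.

Lemma pow2_bracket (a : R) : 0 < a -> exists p : Z, powerRZ 2 p <= a < 2 * powerRZ 2 p.
Proof.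
  intros Ha. set (x := ln a / ln 2).
  assert (Hln2 : 0 < ln 2) by (rewrite <- ln_1; apply ln_increasing; lra).
  assert (Hx : Rpower 2 x = a).
  { unfold Rpower, x. replace (ln a / ln 2 * ln 2) with (ln a) by (field; lra).
    exact (exp_ln a Ha). }
  destruct (archimed x) as [Hup Hup'].
  exists (up x - 1)%Z. rewrite powerRZ_Rpower, minus_IZR, <- Hx by lra. split.
  - apply Rle_Rpower; lra.
  - replace (2 * Rpower 2 (IZR (up x) - 1)) with (Rpower 2 (1 + (IZR (up x) - 1))).
    + apply Rpower_lt; lra.
    + rewrite Rpower_plus, Rpower_1 by lra. reflexivity.
Qed.

Lemma pow2_is_binary (neg : bool) (p : Z) :
  exists q : Z, (if neg then - powerRZ 2 p else powerRZ 2 p) = / powerRZ 2 q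
             \/ (if neg then - powerRZ 2 p else powerRZ 2 p) = - / powerRZ 2 q.
Proof. exists (- p)%Z. rewrite powerRZ_neg', Rinv_inv. destruct neg; auto. Qed.

Definition pow2_act (neg : bool) (p : Z) : binary_act :=
  exist _ (if neg then - powerRZ 2 p else powerRZ 2 p) (pow2_is_binary neg p).

(* The case [r = 0] is why a positive tolerance [eta] is needed. *)
Lemma dyadic_step_exists (r eta : R) :
  0 < eta -> exists s : binary_act, Rabs (r - proj1_sig s) <= Rabs r / 2 + eta.
Proof.
  intros Heta. destruct (Rtotal_order r 0) as [Hr | [Hr | Hr]].
  - destruct (pow2_bracket (- r)) as [p Hp]; [lra|].
    exists (pow2_act true p). simpl. split_Rabs; lra.
  - destruct (pow2_bracket eta Heta) as [p Hp].
    assert (0 < powerRZ 2 p) by (apply powerRZ_lt; lra).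
    exists (pow2_act false p). simpl. split_Rabs; lra.
  - destruct (pow2_bracket r Hr) as [p Hp].
    exists (pow2_act false p). simpl. split_Rabs; lra.
Qed.

Definition dyadic_step (r : R) (n : nat) : binary_act :=
  proj1_sig (constructive_indefinite_description _
    (dyadic_step_exists r (/ 2 ^ n) (inv_pow2_pos n))).

Lemma dyadic_step_spec (r : R) (n : nat) :
  Rabs (r - proj1_sig (dyadic_step r n)) <= Rabs r / 2 + / 2 ^ n.
Proof. unfold dyadic_step. destruct (constructive_indefinite_description _ _) as [s Hs]. exact Hs. Qed.

Lemma halving_recurrence (e : nat -> R) (c : R) (m : nat) :
  0 <= c -> (forall j, (j < m)%nat -> e (S j) <= e j / 2 + c) ->
  e m <= e O / 2 ^ m + 2 * c.
Proof.
  intros Hc. induction m as [|m IH]; intros He.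
  - simpl. lra.
  - assert (Hm := IH (fun j Hj => He j ltac:(lia))).
    assert (E : e O / 2 ^ S m = e O / 2 ^ m / 2)
      by (simpl; field; apply pow_nonzero; lra).
    specialize (He m ltac:(lia)). lra.
Qed.

Section SecondaryRun.
Variables (Sy : system) (pi : policy Sy).

Lemma sec_run_fst_S (k : nat) :
  fst (sec_run Sy pi (S k)) =
  fst (sec_run Sy pi k) ++ [pi (fst (sec_run Sy pi k)) (map (obs Sy) (snd (sec_run Sy pi k)))].
Proof. simpl. destruct (sec_run Sy pi k). reflexivity. Qed.

Lemma sec_run_snd (k : nat) :
  exists xs, snd (sec_run Sy pi k) = xs ++ [fold_left (trans Sy) (fst (sec_run Sy pi k)) (init Sy)]
             /\ length xs = k.
Proof.
  induction k as [|k [xs [Hxs Hlen]]]; [exists []; auto|].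
  simpl. destruct (sec_run Sy pi k) as [us ys]. simpl in Hxs |- *.
  exists ys. rewrite fold_left_app, Hxs, last_last, length_app, Hlen. simpl.
  split; [reflexivity | lia].
Qed.

Lemma sec_state_fold (k : nat) :
  sec_state Sy pi k = fold_left (trans Sy) (fst (sec_run Sy pi k)) (init Sy).
Proof.
  unfold sec_state. destruct (sec_run_snd k) as [xs [-> <-]]. apply nth_middle.
Qed.

Lemma sec_state_S (k : nat) :
  exists u, sec_state Sy pi (S k) = trans Sy (sec_state Sy pi k) u.
Proof.
  rewrite !sec_state_fold, sec_run_fst_S, fold_left_app. eexists. reflexivity.
Qed.

End SecondaryRun.

Section PrimaryRun.
Variables (P Sy : system) (pih : ppolicy P Sy) (z : nat -> nat) (xsec : nat -> St Sy).

Lemma prim_run_fst_S (t : nat) :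
  fst (prim_run P Sy pih z xsec (S t)) =
  fst (prim_run P Sy pih z xsec t) ++
    [pih (fst (prim_run P Sy pih z xsec t)) (map (obs P) (snd (prim_run P Sy pih z xsec t)))
         (map xsec (seq 0 (S (ell z t))))].
Proof. simpl. destruct (prim_run P Sy pih z xsec t). reflexivity. Qed.

Lemma prim_run_snd (t : nat) :
  exists xs, snd (prim_run P Sy pih z xsec t) =
               xs ++ [fold_left (trans P) (fst (prim_run P Sy pih z xsec t)) (init P)]
             /\ length xs = t.
Proof.
  induction t as [|t [xs [Hxs Hlen]]]; [exists []; auto|].
  simpl. destruct (prim_run P Sy pih z xsec t) as [us ys]. simpl in Hxs |- *.
  exists ys. rewrite fold_left_app, Hxs, last_last, length_app, Hlen. simpl.
  split; [reflexivity | lia].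
Qed.

Lemma prim_state_fold (t : nat) :
  prim_state P Sy pih z xsec t = fold_left (trans P) (fst (prim_run P Sy pih z xsec t)) (init P).
Proof.
  unfold prim_state. destruct (prim_run_snd t) as [xs [-> <-]]. apply nth_middle.
Qed.

Lemma prim_state_S (t : nat) :
  prim_state P Sy pih z xsec (S t) =
  trans P (prim_state P Sy pih z xsec t)
    (pih (fst (prim_run P Sy pih z xsec t)) (map (obs P) (snd (prim_run P Sy pih z xsec t)))
         (map xsec (seq 0 (S (ell z t))))).
Proof. rewrite !prim_state_fold, prim_run_fst_S, fold_left_app. reflexivity. Qed.

End PrimaryRun.

Lemma strictly_increasing_mono (z : nat -> nat) (a b : nat) :
  strictly_increasing z -> (a <= b)%nat -> (z a <= z b)%nat.
Proof.
  intros Hz Hab. destruct (Nat.eq_dec a b) as [-> | Hne]; [lia|].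
  apply Nat.lt_le_incl, Hz. lia.
Qed.

Lemma strictly_increasing_ge (z : nat -> nat) (n : nat) :
  strictly_increasing z -> (n <= z n)%nat.
Proof.
  intros Hz. induction n as [|n IH]; [lia|].
  specialize (Hz n (S n) (Nat.lt_succ_diag_r n)). lia.
Qed.

Lemma length_filter_leb_seq (n l : nat) :
  length (filter (fun j => Nat.leb j l) (seq 0 n)) = Nat.min n (S l).
Proof.
  induction n as [|n IH]; [reflexivity|].
  rewrite seq_S, filter_app, length_app, IH. simpl.
  destruct (Nat.leb_spec n l); simpl; lia.
Qed.

Lemma ell_block (z : nat -> nat) (l t : nat) :
  strictly_increasing z -> (z l <= t < z (S l))%nat -> ell z t = S l.
Proof.
  intros Hz Ht. unfold ell.
  rewrite (filter_ext _ (fun j => Nat.leb j l)).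
  - rewrite length_filter_leb_seq.
    pose proof (strictly_increasing_ge z l Hz). lia.
  - intros j. destruct (Nat.leb_spec (z j) t), (Nat.leb_spec j l); auto.
    + pose proof (strictly_increasing_mono z (S l) j Hz ltac:(lia)). lia.
    + pose proof (strictly_increasing_mono z j l Hz ltac:(lia)). lia.
Qed.

Lemma last_map_seq {A : Type} (f : nat -> A) (n : nat) (d : A) :
  last (map f (seq 0 (S n))) d = f n.
Proof. rewrite seq_S, map_app. apply last_last. Qed.

Definition block_start (l : nat) : nat := l * (l + 8).

Lemma block_start_increasing : strictly_increasing block_start.
Proof. intros a b Hab. unfold block_start. nia. Qed.

(* The robot replays its own actions to know its position; the secondary
   history has length [l + 2] during block [l], so the tolerance is [2^-(l+8)]. *)
Definition tracker : ppolicy S_binary S_thirds := fun us _ xs =>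
  dyadic_step (last xs 0 - fold_left (trans S_binary) us (init S_binary)) (length xs + 6).

Lemma tracker_target (us : list binary_act) (ys : list (option nat)) (f : nat -> R) (n : nat) :
  tracker us ys (map f (seq 0 (S n))) =
  dyadic_step (f n - fold_left (trans S_binary) us (init S_binary)) (n + 7).
Proof.
  unfold tracker. rewrite last_map_seq, length_map, length_seq.
  f_equal. lia.
Qed.

Lemma block_error_le (e0 : R) (l : nat) : 0 <= e0 <= 1 / 2 ->
  e0 / 2 ^ (2 * l + 9) + 2 * / 2 ^ (l + 8) <= / 2 ^ (S l + 4).
Proof.
  intros He0.
  assert (Ha : 0 < / 2 ^ l <= 1).
  { split; [apply inv_pow2_pos|]. rewrite <- Rinv_1. exact (inv_pow2_le 0 l (Nat.le_0_l l)). }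
  replace (2 * l + 9)%nat with (l + (l + 9))%nat by lia.
  replace (S l + 4)%nat with (l + 5)%nat by lia.
  unfold Rdiv. rewrite !inv_pow2_add. set (a := / 2 ^ l) in *.
  cbn [pow]. field_simplify. nra.
Qed.

Section Tracking.
Variable pi : policy S_thirds.
Let X := sec_state S_thirds pi.
Let Y := prim_state S_binary S_thirds tracker block_start X.

Lemma thirds_state_S (k : nat) : exists u : thirds_act, X (S k) = X k + proj1_sig u.
Proof. exact (sec_state_S S_thirds pi k). Qed.

Lemma thirds_state_step (k : nat) : Rabs (X (S k) - X k) <= 1 / 3.
Proof.
  destruct (thirds_state_S k) as [[u Hu] ->]. simpl.
  destruct Hu as [-> | [-> | ->]]; split_Rabs; lra.
Qed.

Lemma thirds_state_third (k : nat) :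
  exists n : Z, X k = IZR n / 3 /\ (Z.abs n <= Z.of_nat k)%Z.
Proof.
  induction k as [|k [n [Hn Hnk]]].
  - exists 0%Z. split; [unfold X, sec_state; simpl; lra | simpl; lia].
  - destruct (thirds_state_S k) as [[u Hu] ->]. simpl. rewrite Hn.
    destruct Hu as [-> | [-> | ->]].
    + exists (n - 1)%Z. rewrite minus_IZR. split; [lra | lia].
    + exists n. split; [lra | lia].
    + exists (n + 1)%Z. rewrite plus_IZR. split; [lra | lia].
Qed.

Lemma tracking_step (l t : nat) : (block_start l <= t < block_start (S l))%nat ->
  Rabs (X (S l) - Y (S t)) <= Rabs (X (S l) - Y t) / 2 + / 2 ^ (l + 8).
Proof.
  intros Ht. unfold Y at 1. rewrite prim_state_S, (ell_block _ l t block_start_increasing Ht).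
  rewrite tracker_target, <- prim_state_fold. fold Y.
  replace (S l + 7)%nat with (l + 8)%nat by lia.
  change (trans S_binary ?y ?u) with (y + proj1_sig u).
  replace (X (S l) - (Y t + _)) with (X (S l) - Y t - proj1_sig
    (dyadic_step (X (S l) - Y t) (l + 8))) by ring.
  apply dyadic_step_spec.
Qed.

Lemma tracking_invariant (l : nat) : Rabs (X l - Y (block_start l)) <= / 2 ^ (l + 4).
Proof.
  induction l as [|l IH].
  - unfold X, Y, sec_state, prim_state. simpl. rewrite Rminus_0_r, Rabs_R0.
    left. exact (inv_pow2_pos 4).
  - set (e j := Rabs (X (S l) - Y (block_start l + j)%nat)).
    assert (He0 : e O <= 1 / 2).
    { unfold e. rewrite Nat.add_0_r.
      replace (X (S l) - Y (block_start l)) with ((X (S l) - X l) + (X l - Y (block_start l)))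
        by ring.
      pose proof (Rabs_triang (X (S l) - X l) (X l - Y (block_start l))).
      pose proof (thirds_state_step l). pose proof (inv_pow2_le 4 (l + 4) ltac:(lia)).
      simpl in *. lra. }
    assert (Hblock := halving_recurrence e (/ 2 ^ (l + 8)) (2 * l + 9)
                        (Rlt_le _ _ (inv_pow2_pos _))).
    replace (block_start (S l)) with (block_start l + (2 * l + 9))%nat
      by (unfold block_start; nia).
    fold (e (2 * l + 9)%nat). eapply Rle_trans.
    { apply Hblock. intros j Hj. unfold e. rewrite Nat.add_succ_r.
      apply tracking_step. unfold block_start in *. nia. }
    apply block_error_le. split; [apply Rabs_pos | exact He0].
Qed.
End Tracking.

Lemma sqz_radius (q : nat) : 1 / (4 * 2 ^ q) = / 2 ^ (q + 2).
Proof. rewrite pow_add. simpl. field. apply pow_nonzero. lra. Qed.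

(* Windows of [h_sqz] may overlap (those of [0] and [1] do), but never near a third. *)
Lemma sqz_prop_near_third (w : R) (n : Z) (q : nat) :
  Rabs (w - IZR n / 3) <= / 2 ^ 4 -> sqz_prop w q -> Z.of_nat q = n.
Proof.
  intros Hw Hq. unfold sqz_prop in Hq. rewrite sqz_radius, INR_IZR_INZ in Hq.
  pose proof (inv_pow2_le 2 (q + 2) ltac:(lia)). simpl in *.
  assert (Hd : -1 < IZR (n - Z.of_nat q) < 1) by (rewrite minus_IZR; split_Rabs; lra).
  destruct Hd as [Hd1 Hd2]. apply lt_IZR in Hd1, Hd2. lia.
Qed.

Lemma sqz_prop_of_near (w : R) (q k : nat) :
  (q <= k)%nat -> Rabs (w - INR q / 3) <= / 2 ^ (k + 4) -> sqz_prop w q.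
Proof.
  intros Hqk Hw. unfold sqz_prop. rewrite sqz_radius.
  pose proof (inv_pow2_le (q + 2) (k + 4) ltac:(lia)). split_Rabs; lra.
Qed.

Lemma h_sqz_Some (w : R) (q : nat) :
  sqz_prop w q -> (forall q', sqz_prop w q' -> q' = q) -> h_sqz w = Some q.
Proof.
  intros Hq Huniq. unfold h_sqz.
  destruct (excluded_middle_informative _) as [H | H]; [| exfalso; eauto].
  destruct (constructive_indefinite_description _ H) as [q' Hq']. simpl.
  f_equal. exact (Huniq q' Hq').
Qed.

Lemma h_sqz_None (w : R) : (forall q, ~ sqz_prop w q) -> h_sqz w = None.
Proof.
  intros Hnone. unfold h_sqz.
  destruct (excluded_middle_informative _) as [[q Hq] | _]; [| reflexivity].
  exfalso. exact (Hnone q Hq).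
Qed.

Lemma h_sqz_near_third (w : R) (n : Z) (k : nat) :
  (Z.abs n <= Z.of_nat k)%Z -> Rabs (w - IZR n / 3) <= / 2 ^ (k + 4) ->
  h_sqz w = if (0 <=? n)%Z then Some (Z.to_nat n) else None.
Proof.
  intros Hnk Hw.
  assert (Hw4 : Rabs (w - IZR n / 3) <= / 2 ^ 4)
    by (eapply Rle_trans; [exact Hw | apply inv_pow2_le; lia]).
  destruct (Z.leb_spec 0 n) as [Hn | Hn].
  - apply h_sqz_Some.
    + apply (sqz_prop_of_near w _ k); [lia|].
      rewrite INR_IZR_INZ, Z2Nat.id by exact Hn. exact Hw.
    + intros q' Hq'. apply (sqz_prop_near_third w n q' Hw4) in Hq'. lia.
  - apply h_sqz_None. intros q Hq. apply (sqz_prop_near_third w n q Hw4) in Hq. lia.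
Qed.

Theorem lemma1 : one_illusion S_binary S_thirds obs_eq.
Proof.
  exists tracker, block_start. split; [exact block_start_increasing|].
  intros pi k. simpl.
  destruct (thirds_state_third pi k) as [n [Hn Hnk]].
  assert (Hclose := tracking_invariant pi k). rewrite Rabs_minus_sym, Hn in Hclose.
  rewrite Hn, (h_sqz_near_third _ n k Hnk Hclose).
  apply (h_sqz_near_third _ n k Hnk).
  rewrite Rminus_diag, Rabs_R0. left. apply inv_pow2_pos.
Qed.
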